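(* Let $\alpha>0$ and let $n$ be a positive integer. Let $f_n(x_1,\dots,x_n;\theta)$ be the joint probability density or mass function of random variables $X_1,\dots,X_n$, parameterized by $\theta\in\Theta\subseteq\mathbb{R}$. Assume there is a statistic $\varphi_n=\varphi(X_1,\dots,X_n)$ and a function $\Lambda$ such that $\frac{f_n(X_1,\dots,X_n;\theta_1)}{f_n(X_1,\dots,X_n;\theta_0)}=\Lambda(\varphi_n,\theta_0,\theta_1)$ for all $\theta_0,\theta_1\in\Theta$, where $\Lambda(\varphi_n,\theta_0,\theta_1)$ is increasing with respect to $\varphi_n$ whenever $\theta_0<\theta_1$. Let $\widehat{\theta}_n$ be a function of $\varphi_n$ taking values in $\Theta$. Then for every $\theta\in\Theta$, $$\Pr\Big\{\tfrac{f_n(X_1,\dots,X_n;\theta)}{f_n(X_1,\dots,X_n;\widehat\theta_n)}\le\tfrac{\alpha}{2},\ \widehat\theta_n\le\theta\ \Big|\ \theta\Big\}\le\tfrac{\alpha}{2},\qquad \Pr\Big\{\tfrac{f_n(X_1,\dots,X_n;\theta)}{f_n(X_1,\dots,X_n;\widehat\theta_n)}\le\tfrac{\alpha}{2},\ \widehat\theta_n\ge\theta\ \Big|\ \theta\Big\}\le\tfrac{\alpha}{2},$$ $$\Pr\Big\{\tfrac{f_n(X_1,\dots,X_n;\theta)}{f_n(X_1,\dots,X_n;\widehat\theta_n)}\le\tfrac{\alpha}{2}\ \Big|\ \theta\Big\}\le\alpha .$$ Moreover, if in addition $\widehat\theta_n$ is a maximum likelihood estimator of $\theta$, then for every nonempty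 subset $\mathscr{S}\subseteq\Theta$ and every $\theta\in\mathscr{S}$, $$\Pr\Big\{\tfrac{\sup_{\vartheta\in\mathscr{S}}f_n(X_1,\dots,X_n;\vartheta)}{\sup_{\vartheta\in\Theta}f_n(X_1,\dots,X_n;\vartheta)}\le\tfrac{\alpha}{2},\ \widehat\theta_n\le\inf\mathscr{S}\ \Big|\ \theta\Big\}\le\tfrac{\alpha}{2},\qquad \Pr\Big\{\tfrac{\sup_{\vartheta\in\mathscr{S}}f_n(X_1,\dots,X_n;\vartheta)}{\sup_{\vartheta\in\Theta}f_n(X_1,\dots,X_n;\vartheta)}\le\tfrac{\alpha}{2},\ \widehat\theta_n\ge\sup\mathscr{S}\ \Big|\ \theta\Big\}\le\tfrac{\alpha}{2},$$ $$\Pr\Big\{\tfrac{\sup_{\vartheta\in\mathscr{S}}f_n(X_1,\dots,X_n;\vartheta)}{\sup_{\vartheta\in\Theta}f_n(X_1,\dots,X_n;\vartheta)}\le\tfrac{\alpha}{2}\ \Big|\ \theta\Big\}\le\alpha .$$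
   Context: $\Pr\{\cdot\mid\theta\}$ denotes probability when $X_1,\dots,X_n$ have joint density/mass function $f_n(\cdot;\theta)$. The random variables $X_1,\dots,X_n$ need not be independent. *)

From HB Require Import structures.
From mathcomp Require Import all_boot all_order all_algebra.
From mathcomp Require Import all_classical all_reals all_analysis.
Set Implicit Arguments. Unset Strict Implicit. Unset Printing Implicit Defensive.
Import Order.TTheory GRing.Theory Num.Theory.
Local Open Scope classical_set_scope.
Local Open Scope ring_scope.

(* Pr{ A | theta } when the data X = (X_1,...,X_n) (valued in T) has density
   x |-> f x theta with respect to the dominating measure mu
   (mu = Lebesgue measure gives a density, mu = counting measure a mass function). *)
Definition Pr (d : measure_display) (T : measurableType d) (R : realType)
  (mu : {measure set T -> \bar R}) (f : T -> R -> R) (theta : R) (A : set T)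
  : \bar R :=
  (\int[mu]_(x in A) (f x theta)%:E)%E.

From HB Require Import structures.
From mathcomp Require Import all_boot all_order all_algebra.
From mathcomp Require Import all_classical all_reals all_analysis.
From mathcomp Require Import measurable_realfun.
Import Order.TTheory GRing.Theory Num.Theory.
Set Implicit Arguments. Unset Strict Implicit.
Local Open Scope classical_set_scope.
Local Open Scope ring_scope.

(* Fix theta and write thetahat = g (phi x).  On the event
   f(x; theta) <= c f(x; thetahat) with thetahat <= theta, monotonicity of the
   likelihood ratio propagates the inequality f(y; theta) <= c f(y; thetahat)
   to every y with phi y <= phi x, so the sublevel set {phi <= phi x} has
   P_theta-probability at most c * P_thetahat{...} <= c.  The event is contained
   in the union of these sublevel sets, which is itself a sublevel set of phi
   (possibly with strict inequality) and hence, by continuity from below, also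
   has probability at most c.  The case thetahat >= theta is symmetric, and
   the union bound gives 2c.  For a maximum likelihood estimator the sup over
   Theta is f(x; thetahat) and the sup over S dominates f(x; theta), so the
   profile likelihood events are contained in the events above. *)

Lemma cofinal_nondecreasing_seq (R : realType) (V : set R) : V !=set0 ->
  exists u : R^nat, [/\ nondecreasing_seq u,
    forall n, exists2 t, V t & u n <= t &
    forall s, V s -> exists n, s <= u n].
Proof.
move=> [s0 Vs0]; have [[M VM]|unbounded] := pselect (has_ubound V); last first.
  exists (fun n => n%:R); split.
  - by move=> n m nm; rewrite ler_nat.
  - move=> n; apply: contra_notP unbounded => nVn.
    exists n%:R => t Vt; rewrite leNgt; apply/negP => nt.
    by apply: nVn; exists t => //; exact: ltW.
  - by move=> s _; exists (Num.truncn s).+1; exact/ltW/truncnS_gt.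
have supV : has_sup V by split; [exists s0 | exists M].
have [Vsup|nVsup] := pselect (V (sup V)).
  exists (fun=> sup V); split => [n m _ // | n | s Vs]; first by exists (sup V).
  by exists 0%N => /=; exact: (ub_le_sup supV.2 Vs).
exists (fun n => sup V - n.+1%:R^-1); split.
- by move=> n m nm; rewrite lerD2l lerN2 lef_pV2 ?posrE // ler_nat.
- move=> n; have [t Vt lt_t] := sup_adherent (ltac:(by rewrite invr_gt0) :
    0 < n.+1%:R^-1) supV.
  by exists t => //; exact: ltW.
- move=> s Vs; have lt_s : s < sup V.
    by rewrite lt_neqAle (ub_le_sup supV.2 Vs) andbT; apply: contra_notN nVsup => /eqP <-.
  have gap_gt0 : 0 < sup V - s by rewrite subr_gt0.
  exists (Num.truncn (sup V - s)^-1); rewrite lerBrDr -lerBrDl.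
  rewrite -[leRHS](invrK (sup V - s)) lef_pV2 ?posrE ?invr_gt0 //.
  exact/ltW/truncnS_gt.
Qed.

Section sublevel_cover.
Context d (T : measurableType d) (R : realType).
Variables (nu : {measure set T -> \bar R}) (psi : T -> R).
Hypothesis mpsi : measurable_fun setT psi.

Lemma measurable_sublevel (s : R) : measurable [set y | psi y <= s].
Proof.
have := mpsi measurableT (measurable_itv `]-oo, s]); rewrite setTI.
by congr measurable; apply/seteqP; split => y /=; rewrite in_itv.
Qed.

Lemma sublevel_cover (A : set T) (b : \bar R) : (0 <= b)%E ->
  (forall x, A x -> (nu [set y | (psi y <= psi x)%R] <= b)%E) ->
  exists B, [/\ measurable B, A `<=` B & (nu B <= b)%E].
Proof.
move=> b_ge0 nu_sublevel.
have [[x0 Ax0]|A0] := pselect (A !=set0); last first.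
  by exists set0; split; rewrite ?measure0 // => x Ax; apply: A0; exists x.
have [u [u_nd u_bounded u_cofinal]] :
    exists u, _ := cofinal_nondecreasing_seq (ex_intro _ _ (imageP psi Ax0)).
pose F n := [set y | psi y <= u n].
have mF n : measurable (F n) by exact: measurable_sublevel.
exists (\bigcup_n F n); split; first exact: bigcupT_measurable.
  move=> x Ax; have [n le_xn] := u_cofinal _ (imageP psi Ax).
  by exists n.
have F_nd : {homo F : n m / (n <= m)%N >-> (n <= m)%O}.
  by move=> n m nm; apply/subsetPset => y /= /le_trans; apply; exact: u_nd.
have nuF := nondecreasing_cvg_mu (mu := nu) mF (bigcupT_measurable _ mF) F_nd.
rewrite -(cvg_lim _ nuF) //; apply: lime_le.
  by apply/cvg_ex; exists (nu (\bigcup_n F n)).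
apply: nearW => n; have [_ [x Ax <-] le_ux] := u_bounded n.
apply: le_trans (nu_sublevel _ Ax); apply: le_measure; rewrite ?inE.
- exact: mF.
- exact: measurable_sublevel.
- by move=> y /= /le_trans; apply.
Qed.

End sublevel_cover.

(* [mh] and [h_ge0] only serve the measure instance below. *)
Definition density_measure d (T : measurableType d) (R : realType)
  (mu : {measure set T -> \bar R}) (h : T -> R)
  (mh : measurable_fun setT h) (h_ge0 : forall x, 0 <= h x) :=
  fun A => (\int[mu]_(x in A) (h x)%:E)%E.

Section density_measure.
Context d (T : measurableType d) (R : realType) (mu : {measure set T -> \bar R}).
Variables (h : T -> R) (mh : measurable_fun setT h) (h_ge0 : forall x, 0 <= h x).

Let mhE : measurable_fun setT (EFin \o h).
Proof. exact/measurable_EFinP. Qed.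

Let density0 : density_measure mu mh h_ge0 set0 = 0%E.
Proof. exact: integral_set0. Qed.

Let density_ge0 A : (0 <= density_measure mu mh h_ge0 A)%E.
Proof. by apply: integral_ge0 => x _; rewrite lee_fin. Qed.

Let density_sigma_additive : semi_sigma_additive (density_measure mu mh h_ge0).
Proof. by apply: semi_sigma_additive_nng_induced mhE _ => x; rewrite lee_fin. Qed.

HB.instance Definition _ := isMeasure.Build _ _ _ (density_measure mu mh h_ge0)
  density0 density_ge0 density_sigma_additive.

End density_measure.

Section nonnegative_integral.
Context d (T : measurableType d) (R : realType) (mu : {measure set T -> \bar R}).
Local Open Scope ereal_scope.

(* No measurability is needed: a nonnegative integral is a supremum over the
   simple functions below the integrand. *)
Lemma ge0_le_integralT (F G : T -> \bar R) :
  (forall x, 0 <= F x) -> (forall x, F x <= G x) ->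
  \int[mu]_x F x <= \int[mu]_x G x.
Proof.
move=> F_ge0 FG; have G_ge0 x : 0 <= G x by exact: le_trans (FG x).
rewrite !ge0_integralTE //; apply: le_ereal_sup => _ [s /= sF <-].
by exists s => //= x; exact: le_trans (FG x).
Qed.

Lemma le_integral_support (h : T -> R) (A B : set T) :
  (forall x, (0 <= h x)%R) -> (forall x, A x -> (0 < h x)%R -> B x) ->
  \int[mu]_(x in A) (h x)%:E <= \int[mu]_(x in B) (h x)%:E.
Proof.
move=> h_ge0 AB; rewrite (integral_mkcond A) (integral_mkcond B).
apply: ge0_le_integralT => x; rewrite /patch.
  by case: ifP; rewrite // lee_fin.
case: ifP => [/set_mem Ax|_]; case: ifP => [_|/negP nBx] //; last by rewrite lee_fin.
have := h_ge0 x; rewrite le_eqVlt => /predU1P[<- //|hx_gt0].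
by exfalso; apply/nBx/mem_set/AB.
Qed.

Lemma integral_le_scaled_density (h k : T -> R) (E : set T) (c : R) :
  measurable E -> measurable_fun setT h -> measurable_fun setT k ->
  (forall x, (0 <= h x)%R) -> (forall x, (0 <= k x)%R) ->
  \int[mu]_x (k x)%:E = 1 -> (0 <= c)%R ->
  (forall y, E y -> (h y <= c * k y)%R) ->
  \int[mu]_(x in E) (h x)%:E <= c%:E.
Proof.
move=> mE mh mk h_ge0 k_ge0 k1 c_ge0 hk.
have hE_ge0 x : 0 <= (h x)%:E by rewrite lee_fin.
have kE_ge0 x : 0 <= (k x)%:E by rewrite lee_fin.
have mkE : measurable_fun E (EFin \o k) by exact/measurable_funTS/measurable_EFinP.
have hk_int : \int[mu]_(x in E) (h x)%:E <= \int[mu]_(x in E) (c%:E * (k x)%:E).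
  apply: ge0_le_integral => //.
  - exact/measurable_funTS/measurable_EFinP.
  - exact: emeasurable_funM mkE.
apply: le_trans hk_int _.
rewrite ge0_integralZl_EFin // -[leRHS]mule1; apply: lee_wpmul2l; first by rewrite lee_fin.
rewrite -k1; apply: ge0_subset_integral => //; exact/measurable_EFinP.
Qed.

End nonnegative_integral.

Lemma ratio_le_profile_ratio (R : realType) (l : R -> R) (Theta S : set R)
    (th th_max : R) :
  Theta th_max -> (forall t, Theta t -> l t <= l th_max) -> 0 <= l th_max ->
  S `<=` Theta -> S th ->
  l th / l th_max <= sup (l @` S) / sup (l @` Theta).
Proof.
move=> Theta_max l_max l_max_ge0 STheta Sth.
have ->: sup (l @` Theta) = l th_max.
  apply/le_anti/andP; split.
  - by apply: ge_sup; [exists (l th_max), th_max | move=> _ [t ? <-]; exact: l_max].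
  - apply: ub_le_sup; last by exists th_max.
    by exists (l th_max) => _ [t ? <-]; exact: l_max.
apply: ler_wpM2r; first by rewrite invr_ge0.
apply: ub_le_sup; last by exists th.
by exists (l th_max) => _ [t /STheta ? <-]; exact: l_max.
Qed.

Section monotone_likelihood_ratio.
Context d (T : measurableType d) (R : realType).
Variables (mu : {measure set T -> \bar R}) (Theta : set R) (f : T -> R -> R)
  (phi : T -> R) (Lambda : R -> R -> R -> R) (g : R -> R).
Hypotheses
  (mf : forall th, Theta th -> measurable_fun setT (fun x => f x th))
  (f_ge0 : forall th, Theta th -> forall x, 0 <= f x th)
  (f1 : forall th, Theta th -> (\int[mu]_x (f x th)%:E = 1)%E)
  (mphi : measurable_fun setT phi)
  (f_ratio : forall th0 th1, Theta th0 -> Theta th1 ->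
     forall x, f x th1 = Lambda (phi x) th0 th1 * f x th0)
  (Lambda_mono : forall th0 th1, Theta th0 -> Theta th1 -> th0 < th1 ->
     forall x y, phi x <= phi y ->
       Lambda (phi x) th0 th1 <= Lambda (phi y) th0 th1)
  (g_Theta : forall x, Theta (g (phi x))).

Lemma likelihood_gt0 t th x : Theta t -> Theta th -> 0 < f x th -> 0 < f x t.
Proof.
move=> Tt Tth; rewrite (f_ratio Tt Tth) => prod_gt0.
rewrite lt_def (f_ge0 Tt) andbT; apply: contraTneq prod_gt0 => ->.
by rewrite mulr0 ltxx.
Qed.

Lemma likelihood_dominated_below c t th x y : Theta t -> Theta th -> t <= th ->
  0 < f x th -> f x th <= c * f x t -> phi y <= phi x -> f y th <= c * f y t.
Proof.
move=> Tt Tth; rewrite le_eqVlt => /predU1P[<-|lt_t] fx_gt0 fx_le le_yx.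
  have c_ge1 : 1 <= c by rewrite -(ler_pM2r fx_gt0) mul1r.
  by rewrite -[leLHS]mul1r ler_wpM2r // f_ge0.
have fxt_gt0 := likelihood_gt0 Tt Tth fx_gt0.
have Lambda_le : Lambda (phi x) t th <= c.
  by move: fx_le; rewrite (f_ratio Tt Tth x) ler_pM2r.
rewrite (f_ratio Tt Tth y) ler_wpM2r ?f_ge0 //.
exact: le_trans (Lambda_mono Tt Tth lt_t le_yx) Lambda_le.
Qed.

Lemma likelihood_dominated_above c t th x y : 0 <= c -> Theta t -> Theta th ->
  th <= t -> 0 < f x th -> f x th <= c * f x t -> phi x <= phi y ->
  f y th <= c * f y t.
Proof.
move=> c_ge0 Tt Tth; rewrite le_eqVlt => /predU1P[->|lt_t] fx_gt0 fx_le le_xy.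
  have c_ge1 : 1 <= c by rewrite -(ler_pM2r fx_gt0) mul1r.
  by rewrite -[leLHS]mul1r ler_wpM2r // f_ge0.
have Lambda_ge : 1 <= c * Lambda (phi x) th t.
  by move: fx_le; rewrite (f_ratio Tth Tt x) mulrA -{1}[f x th]mul1r ler_pM2r.
rewrite (f_ratio Tth Tt y) mulrA -[leLHS]mul1r ler_wpM2r ?f_ge0 //.
by apply: le_trans Lambda_ge _; rewrite ler_wpM2l // Lambda_mono.
Qed.

Lemma likelihood_ratio_tails c th : 0 <= c -> Theta th ->
  exists B1 B2 : set T, [/\ measurable B1, measurable B2,
    (Pr mu f th B1 <= c%:E)%E, (Pr mu f th B2 <= c%:E)%E &
    forall x, 0 < f x th -> f x th <= c * f x (g (phi x)) ->
      (g (phi x) <= th -> B1 x) /\ (th <= g (phi x) -> B2 x)].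
Proof.
move=> c_ge0 Tth.
pose nu := density_measure mu (mf Tth) (f_ge0 Tth).
have Pr_dominated (E : set T) x : measurable E ->
    (forall y, E y -> f y th <= c * f y (g (phi x))) -> (nu E <= c%:E)%E.
  have Tx := g_Theta x.
  by move=> mE; apply: integral_le_scaled_density mE (mf Tth) (mf Tx) (f_ge0 Tth)
    (f_ge0 Tx) (f1 Tx) c_ge0.
pose A1 := [set x | [/\ 0 < f x th, f x th <= c * f x (g (phi x)) & g (phi x) <= th]].
pose A2 := [set x | [/\ 0 < f x th, f x th <= c * f x (g (phi x)) & th <= g (phi x)]].
have [B1 [mB1 A1B1 nuB1]] : exists B, [/\ measurable B, A1 `<=` B & (nu B <= c%:E)%E].
  apply: (sublevel_cover mphi); first by rewrite lee_fin.
  move=> x [fx_gt0 fx_le le_gth]; apply: (Pr_dominated _ x).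
    exact: measurable_sublevel.
  by move=> y; apply: likelihood_dominated_below fx_gt0 fx_le.
have mphiN : measurable_fun setT (fun x => - phi x) by exact: measurable_funN.
have [B2 [mB2 A2B2 nuB2]] : exists B, [/\ measurable B, A2 `<=` B & (nu B <= c%:E)%E].
  apply: (sublevel_cover mphiN); first by rewrite lee_fin.
  move=> x [fx_gt0 fx_le le_thg]; apply: (Pr_dominated _ x).
    exact: measurable_sublevel.
  by move=> y /=; rewrite lerN2; apply: likelihood_dominated_above fx_gt0 fx_le.
exists B1, B2; split => // x fx_gt0 fx_le; split => ?.
- exact: A1B1.
- exact: A2B2.
Qed.

Lemma Pr_likelihood_ratio_events c th (P : set T) : 0 <= c -> Theta th ->
  (forall x, P x -> 0 < f x th -> f x th / f x (g (phi x)) <= c) ->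
  [/\ (Pr mu f th [set x | P x /\ (g (phi x) <= th)%R] <= c%:E)%E,
      (Pr mu f th [set x | P x /\ (th <= g (phi x))%R] <= c%:E)%E &
      (Pr mu f th P <= (c + c)%:E)%E].
Proof.
move=> c_ge0 Tth P_ratio.
have [B1 [B2 [mB1 mB2 PrB1 PrB2 PB]]] := likelihood_ratio_tails c_ge0 Tth.
have {}PB x : P x -> 0 < f x th ->
    (g (phi x) <= th -> B1 x) /\ (th <= g (phi x) -> B2 x).
  move=> Px fx_gt0; apply: PB => //.
  by rewrite -ler_pdivrMr ?P_ratio // (likelihood_gt0 (g_Theta x) Tth).
have Pr_le A B : (forall x, A x -> 0 < f x th -> B x) ->
    (Pr mu f th A <= Pr mu f th B)%E.
  by apply: le_integral_support; exact: f_ge0.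
split.
- by apply: le_trans PrB1; apply: Pr_le => x [Px le_gth] /(PB _ Px) [+ _]; apply.
- by apply: le_trans PrB2; apply: Pr_le => x [Px le_thg] /(PB _ Px) [_]; apply.
apply: (@le_trans _ _ (Pr mu f th (B1 `|` B2))).
  apply: Pr_le => x Px /(PB _ Px) [B1x B2x].
  by have [/B1x|/ltW/B2x] := leP (g (phi x)) th; [left | right].
apply: le_trans (measureU2 (density_measure mu (mf Tth) (f_ge0 Tth)) mB1 mB2) _.
by rewrite EFinD leeD.
Qed.

End monotone_likelihood_ratio.

Unset Implicit Arguments.
Theorem theorem2 (R : realType) (d : measure_display) (T : measurableType d)
  (mu : {measure set T -> \bar R})
  (Theta : set R) (f : T -> R -> R)
  (phi : T -> R) (Lambda : R -> R -> R -> R) (g : R -> R) (alpha : R) :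
  0 < alpha ->
  (forall th, Theta th -> measurable_fun setT (fun x => f x th)) ->
  (forall th, Theta th -> forall x, 0 <= f x th) ->
  (forall th, Theta th -> (\int[mu]_x (f x th)%:E = 1)%E) ->
  measurable_fun setT phi ->
  (forall th0 th1, Theta th0 -> Theta th1 ->
     forall x, f x th1 = Lambda (phi x) th0 th1 * f x th0) ->
  (forall th0 th1, Theta th0 -> Theta th1 -> th0 < th1 ->
     forall x y, phi x <= phi y ->
       Lambda (phi x) th0 th1 <= Lambda (phi y) th0 th1) ->
  (forall x, Theta (g (phi x))) ->
  (forall th, Theta th ->
     (Pr mu f th [set x | (f x th / f x (g (phi x)) <= alpha / 2
                          /\ g (phi x) <= th)%R] <= (alpha / 2)%R%:E)%E /\
     (Pr mu f th [set x | (f x th / f x (g (phi x)) <= alpha / 2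
                          /\ th <= g (phi x))%R] <= (alpha / 2)%R%:E)%E /\
     (Pr mu f th [set x | (f x th / f x (g (phi x)) <= alpha / 2)%R]
        <= alpha%:E)%E) /\
  ((forall x th, Theta th -> f x th <= f x (g (phi x))) ->
   forall S : set R, S `<=` Theta -> S !=set0 ->
   forall th, S th ->
     (Pr mu f th [set x | (sup [set f x v | v in S] / sup [set f x v | v in Theta]
                            <= alpha / 2)%R
                          /\ ((g (phi x))%:E <= ereal_inf [set v%:E | v in S])%E]
        <= (alpha / 2)%R%:E)%E /\
     (Pr mu f th [set x | (sup [set f x v | v in S] / sup [set f x v | v in Theta]
                            <= alpha / 2)%R
                          /\ (ereal_sup [set v%:E | v in S] <= (g (phi x))%:E)%E]
        <= (alpha / 2)%R%:E)%E /\
     (Pr mu f th [set x | (sup [set f x v | v in S] / sup [set f x v | v in Theta]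
                            <= alpha / 2)%R]
        <= alpha%:E)%E).
Proof.
move=> alpha_gt0 mf f_ge0 f1 mphi f_ratio Lambda_mono g_Theta.
have c_ge0 : 0 <= alpha / 2 by rewrite divr_ge0 // ltW.
have events :=
  Pr_likelihood_ratio_events mf f_ge0 f1 mphi f_ratio Lambda_mono g_Theta c_ge0.
split=> [th Tth | f_mle S STheta _ th Sth].
  have [Pr_lower Pr_upper Pr_all] := events th _ Tth (fun _ ratio _ => ratio).
  by rewrite -splitr in Pr_all.
have [|Pr_lower Pr_upper Pr_all] := events th [set x | sup [set f x v | v in S] /
    sup [set f x v | v in Theta] <= alpha / 2] (STheta _ Sth).
  move=> x /= ratio _; apply: le_trans ratio.
  apply: (ratio_le_profile_ratio (g_Theta x)) STheta Sth.
  - exact: f_mle.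
  - exact: f_ge0.
rewrite -splitr in Pr_all.
have Pr_le A B : A `<=` B -> (Pr mu f th A <= Pr mu f th B)%E.
  by move=> AB; apply: le_integral_support => [|x /AB //]; exact: f_ge0 (STheta _ Sth).
split; [apply: le_trans Pr_lower | split=> //; apply: le_trans Pr_upper];
  apply: Pr_le => x [ratio le_g]; split=> //; rewrite -lee_fin.
- by apply: le_trans le_g _; apply: ereal_inf_lbound; exists th.
- by apply: le_trans le_g; apply: ereal_sup_ubound; exists th.
Qed.
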